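(* Let $d\ge1$ and let $\rho$ be a finite intensity on $\Omega=B^d_+\times B^d_+$ with total mass $\Lambda>0$ such that $\mu=\rho/\Lambda$ is absolutely continuous with respect to Lebesgue measure on $\mathbb{R}^{2d}$, and assume that neither the green marginal nor the red marginal of $\mu$ (on $\mathbb{R}^d$) is supported on a proper linear subspace of $\mathbb{R}^d$. Then for every measurable map $\phi:[0,1]\to\Omega$ with $\phi_*(\mathrm{Uniform}[0,1])=\mu$, the pullback kernel $W_\phi(u,v)=K(\phi(u),\phi(v))$ on $[0,1]^2$ is not sectionally of bounded variation.
   Context: $B^d_+=\{x\in\mathbb{R}^d:x_k\ge0\ \forall k,\ \|x\|\le1\}$, $\Omega=B^d_+\times B^d_+$; a point $s\in\Omega$ is written $s=(\vec g_s,\vec r_s)$ and $K(s,t)=\vec g_s\cdot\vec r_t$. The green (resp. red) marginal of $\mu$ is its pushforward under $s\mapsto\vec g_s$ (resp. $s\mapsto \vec r_s$). A function $f:[0,1]\to\mathbb{R}$ is in $\mathrm{BV}([0,1])$ if $\sup\sum_{i=1}^k|f(t_i)-f(t_{i-1})|<\infty$ over all partitions $0=t_0<\dots<t_k=1$. A kernel $W:[0,1]^2\to\mathbb{R}$ is sectionally of bounded variation if for almost every $v\in[0,1]$ the function $u\mapsto W(u,v)$ is in $\mathrm{BV}([0,1])$ and for almost every $u\in[0,1]$ the function $v\mapsto W(u,v)$ is in $\mathrm{BV}([0,1])$. *)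

From HB Require Import structures.
From mathcomp Require Import all_boot all_order all_algebra.
From mathcomp Require Import all_classical all_reals all_analysis.
Set Implicit Arguments. Unset Strict Implicit. Unset Printing Implicit Defensive.
Import Order.TTheory GRing.Theory Num.Theory.
Local Open Scope classical_set_scope.
Local Open Scope ring_scope.

(** Ambient space R^d x R^d; a point s = (g_s, r_s). *)
Definition pt (R : realType) (d : nat) := (d.-tuple R * d.-tuple R)%type.

Definition dotp (R : realType) (d : nat) (x y : d.-tuple R) : R :=
  \sum_(k < d) tnth x k * tnth y k.

Definition Bplus (R : realType) (d : nat) : set (d.-tuple R) :=
  [set x | (forall k : 'I_d, 0 <= tnth x k) /\ dotp x x <= 1].

Definition Omega (R : realType) (d : nat) : set (pt R d) :=
  [set s | @Bplus R d s.1 /\ @Bplus R d s.2].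

Definition K (R : realType) (d : nat) (s t : pt R d) : R := dotp s.1 t.2.

Definition linear_subspace (R : realType) (d : nat) (V : set (d.-tuple R)) :=
  [/\ V [tuple (0 : R) | _ < d],
      (forall x y, V x -> V y -> V [tuple tnth x i + tnth y i | i < d]) &
      (forall (c : R) x, V x -> V [tuple c * tnth x i | i < d])].

Definition proper_linear_subspace (R : realType) (d : nat)
    (V : set (d.-tuple R)) :=
  linear_subspace V /\ V <> setT.

Definition box2 (R : realType) (d : nat) (a1 b1 a2 b2 : 'I_d -> R) :
    set (pt R d) :=
  [set s | forall k : 'I_d,
     (a1 k <= tnth s.1 k <= b1 k) /\ (a2 k <= tnth s.2 k <= b2 k)].

Definition vol2 (R : realType) (d : nat) (a1 b1 a2 b2 : 'I_d -> R) : R :=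
  (\prod_(k < d) (b1 k - a1 k)) * (\prod_(k < d) (b2 k - a2 k)).

Definition lebesgue_null2 (R : realType) (d : nat) (N : set (pt R d)) :=
  forall eps : R, 0 < eps ->
  exists a1 b1 a2 b2 : nat -> 'I_d -> R,
    [/\ (forall n k, a1 n k <= b1 n k /\ a2 n k <= b2 n k),
        N `<=` \bigcup_n box2 (a1 n) (b1 n) (a2 n) (b2 n) &
        (forall m, \sum_(0 <= n < m) vol2 (a1 n) (b1 n) (a2 n) (b2 n) <= eps)].

Definition abs_cont_lebesgue2 (R : realType) (d : nat)
    (mu : set (pt R d) -> \bar R) :=
  forall A : set (pt R d), measurable A -> lebesgue_null2 A -> mu A = 0%E.

Definition sectionally_BV (R : realType) (W : R -> R -> R) :=
  {ae (@lebesgue_measure R), forall v, 0 <= v <= 1 -> bounded_variation 0 1 (fun u => W u v)} /\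
  {ae (@lebesgue_measure R), forall u, 0 <= u <= 1 -> bounded_variation 0 1 (fun v => W u v)}.

From HB Require Import structures.
From mathcomp Require Import all_boot all_order all_algebra.
From mathcomp Require Import all_classical all_reals all_analysis.
From mathcomp Require Import ring lra.
Set Implicit Arguments. Unset Strict Implicit. Unset Printing Implicit Defensive.
Import Order.TTheory GRing.Theory Num.Theory.
Local Open Scope classical_set_scope.
Local Open Scope ring_scope.

(* If W_phi were sectionally of bounded variation, then for almost every v the
   map u |-> g(phi u) . r(phi v) would have bounded variation.  Since the red
   marginal charges the complement of every hyperplane, the vectors r(phi v) for
   these v span R^d, so every green coordinate of phi has bounded variation, and
   symmetrically every red one.  But a curve in R^(2d), 2d >= 2, whose
   coordinates have bounded variation has a Lebesgue-null image: cutting [0,1]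
   into N pieces of equal total variation covers the image by N cubes of side
   O(1/N), of total volume O(N^(1-2d)).  As mu is the law of phi, mu would then
   charge a null set, contradicting absolute continuity. *)

Section Spanning.
Variables (R : realType) (d : nat).
Implicit Types (x y c : d.-tuple R) (S : set (d.-tuple R)).

Definition spanning S :=
  forall c, (forall x, S x -> dotp x c = 0) -> c = [tuple 0 | _ < d].

Lemma dotpC x y : dotp x y = dotp y x.
Proof. by apply: eq_bigr => k _; rewrite mulrC. Qed.

Lemma dotp_self_eq0 x : dotp x x = 0 -> x = [tuple 0 | _ < d].
Proof.
move=> /eqP; rewrite psumr_eq0 => [/allP x0|k _]; last exact: sqr_ge0.
apply: eq_from_tnth => k; rewrite tnth_mktuple.
by apply/eqP; move: (x0 k (mem_index_enum k)); rewrite mulf_eq0 orbb.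
Qed.

Lemma orthogonal_proper_linear_subspace c : c <> [tuple 0 | _ < d] ->
  proper_linear_subspace [set x | dotp x c = 0].
Proof.
move=> c0; split; last first.
  by move=> Vc; apply/c0/dotp_self_eq0; have : [set x | dotp x c = 0] c by rewrite Vc.
split => /=.
- by rewrite /dotp big1 // => k _; rewrite tnth_mktuple mul0r.
- move=> x y xc yc; rewrite -[RHS](addr0 0) -{1}xc -yc /dotp -big_split /=.
  by apply: eq_bigr => k _; rewrite tnth_mktuple mulrDl.
- move=> a x xc; rewrite -(mulr0 a) -xc /dotp mulr_sumr.
  by apply: eq_bigr => k _; rewrite tnth_mktuple mulrA.
Qed.

Let rows n (xs : 'I_n -> d.-tuple R) : 'M[R]_(n, d) := \matrix_(i, j) tnth (xs i) j.

(* A family of vectors of S of maximal rank spans R^d: a vector of S outside its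
   span would raise the rank. *)
Lemma spanning_coord_expansion S : spanning S ->
  exists n (xs : 'I_n -> d.-tuple R) (D : 'M[R]_(d, n)),
    (forall i, S (xs i)) /\ forall y k, tnth y k = \sum_(i < n) D k i * dotp y (xs i).
Proof.
move=> spanS.
pose rowv y : 'rV[R]_d := \row_j tnth y j.
pose P m := `[< exists n (xs : 'I_n -> d.-tuple R),
                 (forall i, S (xs i)) /\ \rank (rows xs) = m >].
have P0 : exists m, P m.
  exists 0%N; apply/asboolP; exists 0%N, (fun=> [tuple 0 | _ < d]).
  by split; [case | rewrite flatmx0 mxrank0].
have Pd m : P m -> (m <= d)%N by move=> /asboolP [n [xs [_ <-]]]; exact: rank_leq_col.
have [m /asboolP [n [xs [Sxs rk]]] maxm] := ex_maxnP P0 Pd.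
have subS x : S x -> (rowv x <= rows xs)%MS.
  move=> Sx; apply/negPn/negP => nsub.
  pose xs' (i : 'I_(1 + n)) := if fintype.split i is inr j then xs j else x.
  have E : rows xs' = col_mx (rowv x) (rows xs).
    by apply/matrixP => i j; rewrite !mxE /xs'; case: splitP => l _; rewrite mxE.
  have /maxm : P (\rank (rows xs')).
    apply/asboolP; exists (1 + n)%N, xs'; split => // i.
    by rewrite /xs'; case: fintype.split.
  apply/negP; rewrite -ltnNge E -rk; apply: rank_ltmx; rewrite ltmxE.
  by rewrite -addsmxE addsmxSr col_mx_sub (negbTE nsub).
have full : (1%:M <= rows xs)%MS.
  rewrite submxE mul1mx; set C := cokermx _; apply/eqP/matrixP => i j.
  suff /(congr1 (fun t : d.-tuple R => tnth t i)) : [tuple C k j | k < d] = [tuple 0 | _ < d].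
    by rewrite !tnth_mktuple => ->; rewrite mxE.
  apply: spanS => x /subS; rewrite submxE -/C => /eqP /matrixP /(_ 0 j).
  rewrite !mxE => <-; apply: eq_bigr => k _.
  by rewrite !mxE tnth_mktuple /C mxE.
have [D HD] := submxP full.
exists n, xs, D; split => // y k.
transitivity (\sum_(j < d) tnth y j * (1%:M : 'M[R]_d) k j).
  rewrite (bigD1 k) //= mxE eqxx mulr1 big1 ?addr0 // => j /negbTE.
  by rewrite mxE eq_sym => ->; rewrite mulr0.
rewrite HD /dotp.
under eq_bigr => j _ do rewrite mxE mulr_sumr.
rewrite exchange_big /=; apply: eq_bigr => i _.
rewrite mulr_sumr; apply: eq_bigr => j _.
by rewrite mxE mulrCA.
Qed.
End Spanning.

Section BoundedVariation.
Variables (R : realType) (a b : R).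
Notation BV := (bounded_variation a b).

Lemma bounded_variation_cst (c : R) : BV (fun=> c).
Proof.
exists 0 => _ [s _ <-]; rewrite /variation big1 // => i _.
by rewrite /= subrr normr0.
Qed.

Lemma bounded_variationZ (c : R) f : BV f -> BV (fun x => c * f x).
Proof.
move=> [M hM]; exists (`|c| * M) => _ [s hs <-].
have -> : variation a b (fun x => c * f x) s = `|c| * variation a b f s.
  rewrite /variation mulr_sumr; apply: eq_bigr => i _.
  by rewrite /= -mulrBr normrM.
by rewrite ler_wpM2l // hM //; exists s.
Qed.

Lemma bounded_variation_sum n (F : 'I_n -> R -> R) : a < b ->
  (forall i, BV (F i)) -> BV (fun x => \sum_(i < n) F i x).
Proof.
move=> ab; elim: n F => [|n IH] F BVF.
  under [fun x => _]funext => x do rewrite big_ord0.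
  exact: bounded_variation_cst.
under [fun x => _]funext => x do rewrite big_ord_recr.
apply: (bounded_variationD ab); last exact: BVF.
exact: (IH (fun i => F (widen_ord (leqnSn n) i))).
Qed.

Lemma fine_total_variation_ge f x y : BV f -> a <= x -> x <= y -> y <= b ->
  `|f y - f x| <= fine (total_variation a y f) - fine (total_variation a x f).
Proof.
move=> BVf ax xy yb.
have ay := le_trans ax xy.
have BVy : bounded_variation a y f := bounded_variationl ay yb BVf.
have /(bounded_variationP f ax) TVx := bounded_variationl ax xy BVy.
have /(bounded_variationP f xy) TVxy := bounded_variationr ax xy BVy.
rewrite (total_variationD f ax xy) fineD // addrAC subrr add0r.
by rewrite -lee_fin fineK // total_variation_ge.
Qed.

Definition tv_sum (I : finType) (f : I -> R -> R) (x : R) : R :=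
  \sum_i fine (total_variation a x (f i)).

Lemma tv_sum_control (I : finType) (f : I -> R -> R) x y :
  (forall i, BV (f i)) -> a <= x -> x <= y -> y <= b ->
  0 <= tv_sum f y - tv_sum f x /\
  forall i, `|f i y - f i x| <= tv_sum f y - tv_sum f x.
Proof.
move=> BVf ax xy yb.
have incr i := fine_total_variation_ge (BVf i) ax xy yb.
have incr0 i := le_trans (normr_ge0 _) (incr i).
rewrite /tv_sum -sumrB; split => [|i]; first exact: sumr_ge0.
by rewrite (bigD1 i) //= -[X in X <= _]addr0 lerD ?sumr_ge0.
Qed.
End BoundedVariation.

Lemma bounded_variation_coord (R : realType) d (a b : R) (f : R -> d.-tuple R)
    (S : set (d.-tuple R)) : a < b -> spanning S ->
  (forall x, S x -> bounded_variation a b (fun u => dotp (f u) x)) ->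
  forall k, bounded_variation a b (fun u => tnth (f u) k).
Proof.
move=> ab /spanning_coord_expansion [n [xs [D [Sxs expand]]]] BVS k.
under [fun u => _]funext => u do rewrite expand.
apply: bounded_variation_sum => // i.
by apply: bounded_variationZ; exact: BVS.
Qed.

Lemma grid_cell (R : realType) (r t : R) (m : nat) : 0 < r -> 0 <= t <= m.+1%:R * r ->
  exists2 j, (j <= m)%N & j%:R * r <= t <= j.+1%:R * r.
Proof.
move=> r0; elim: m => [|m IH] /andP [t0 tm]; first by exists 0%N; rewrite ?mul0r ?t0.
have [tm'|tm'] := lerP t (m.+1%:R * r); last by exists m.+1; rewrite ?(ltW tm').
by have [|j jm hj] := IH; [rewrite t0 | exists j; first exact: leqW].
Qed.

Lemma sum_nat_if_lt (R : realType) (q : R) (N m : nat) : 0 <= q ->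
  \sum_(0 <= j < m) (if (j < N)%N then q else 0) <= N%:R * q.
Proof.
move=> q0; suff : \sum_(0 <= j < m) (if (j < N)%N then q else 0) <= (minn m N)%:R * q.
  by move/le_trans; apply; rewrite ler_wpM2r // ler_nat geq_minr.
elim: m => [|m IH]; first by rewrite big_geq // min0n mul0r.
rewrite big_nat_recr //=; case: ifP => mN.
  move: IH; rewrite (minn_idPl (ltnW mN)) (minn_idPl mN) => IH.
  by rewrite -addn1 natrD mulrDl mul1r lerD2r.
have Nm : (N <= m)%N by rewrite leqNgt mN.
by move: IH; rewrite (minn_idPr Nm) (minn_idPr (leqW Nm)) addr0.
Qed.

Section NullImage.
Variables (R : realType) (d : nat).
Hypothesis d_gt0 : (0 < d)%N.
Implicit Types (p q : pt R d) (r : R).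

Definition coord p (i : 'I_d + 'I_d) : R :=
  match i with inl k => tnth p.1 k | inr k => tnth p.2 k end.

Definition cube p r : set (pt R d) :=
  box2 (fun k => tnth p.1 k - r) (fun k => tnth p.1 k + r)
       (fun k => tnth p.2 k - r) (fun k => tnth p.2 k + r).

Lemma measurable_box2 (a1 b1 a2 b2 : 'I_d -> R) : measurable (box2 a1 b1 a2 b2).
Proof.
have mcoord (i : 'I_d + 'I_d) (a b : R) :
    measurable ((coord ^~ i) @^-1` `[a, b]%classic).
  have mf : measurable_fun setT (coord ^~ i).
    case: i => k; apply: measurableT_comp (measurable_tnth k) _.
      exact: measurable_fst.
    exact: measurable_snd.
  by rewrite -[X in measurable X]setTI; exact: mf measurableT _ (measurable_itv _).
have -> : box2 a1 b1 a2 b2 = \bigcap_(k in [set: 'I_d])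
   ((coord ^~ (inl k)) @^-1` `[a1 k, b1 k]%classic `&`
    (coord ^~ (inr k)) @^-1` `[a2 k, b2 k]%classic).
  apply/seteqP; split => s /=.
    by move=> H k _ /=; rewrite !in_itv /=; case: (H k) => -> ->.
  by move=> H k; have := H k I; rewrite /= !in_itv /= => -[-> ->].
apply: fin_bigcap_measurable; first exact: finite_finset.
by move=> k _; apply: measurableI; apply: mcoord.
Qed.

Lemma vol2_cube p r :
  vol2 (fun k => tnth p.1 k - r) (fun k => tnth p.1 k + r)
       (fun k => tnth p.2 k - r) (fun k => tnth p.2 k + r) = (r + r) ^+ (d + d).
Proof.
have side (c : R) : c + r - (c - r) = r + r by ring.
rewrite /vol2 (eq_bigr (fun=> r + r)) => [|k _]; last exact: side.
rewrite [X in _ * X](eq_bigr (fun=> r + r)) => [|k _]; last exact: side.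
by rewrite prodr_const card_ord -exprD.
Qed.

Lemma cube_center p q r : (forall i, `|coord q i - coord p i| <= r) -> cube p r q.
Proof.
move=> close k; have := close (inl k); have := close (inr k).
by rewrite /= !ler_distl => /andP [-> ->] /andP [-> ->].
Qed.

Variables (c : R -> pt R d) (F : R -> R).
Hypothesis F0 : F 0 = 0.
Hypothesis c_controlled : forall x y, 0 <= x -> x <= y -> y <= 1 ->
  0 <= F y - F x /\ forall i, `|coord (c y) i - coord (c x) i| <= F y - F x.

(* [F 1 + 1] rather than [F 1] keeps the mesh positive; the cubes of index
   [j > n] are degenerate, so that the [n]-th cover is a [nat]-indexed family of
   finite total volume. *)
Let L := F 1 + 1.
Let mesh n := L / n.+1%:R.
Let level n j := [set u | 0 <= u <= 1 /\ j%:R * mesh n <= F u <= j.+1%:R * mesh n].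
Let center n j := c (xget 0 (level n j)).
Let radius n j := if (j < n.+1)%N then mesh n else 0.

Lemma controlled_range u : 0 <= u <= 1 -> 0 <= F u <= F 1.
Proof.
move=> /andP [u0 u1].
have [Fu _] := c_controlled (lexx 0) u0 u1.
have [F1 _] := c_controlled u0 u1 (lexx 1).
by rewrite -F0 -subr_ge0 Fu -subr_ge0.
Qed.

Lemma controlled_dist u v i : 0 <= u <= 1 -> 0 <= v <= 1 ->
  `|coord (c v) i - coord (c u) i| <= `|F v - F u|.
Proof.
wlog uv : u v / u <= v => [wlog_uv u01 v01|/andP [u0 _] /andP [_ v1]].
  have [|vu] := leP u v; first by move/wlog_uv; apply.
  by rewrite distrC (distrC (F v)); apply: wlog_uv => //; exact: ltW.
have [Fuv ci] := c_controlled u0 uv v1.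
by rewrite (ger0_norm Fuv); exact: ci.
Qed.

Lemma mesh_gt0 n : 0 < mesh n.
Proof.
have /andP [F1 _] : 0 <= F 1 <= F 1 by apply: controlled_range; rewrite ler01 lexx.
by rewrite divr_gt0 ?ltr0n // /L; lra.
Qed.

Lemma cubes_cover n u : 0 <= u <= 1 ->
  exists j, cube (center n j) (radius n j) (c u).
Proof.
move=> u01.
have [|j jn cellj] := grid_cell (t := F u) (mesh_gt0 n) (m := n).
  have := controlled_range u01.
  by rewrite mulrC divfK ?pnatr_eq0 // /L; lra.
have [u0_01 cellu0] := xgetPex 0 (ex_intro _ u (conj u01 cellj) : exists u, level n j u).
exists j; rewrite /radius ltnS jn; apply: cube_center => i.
apply: le_trans (controlled_dist _ u0_01 u01) _.
move: cellj cellu0 => /andP [lo_u hi_u] /andP [lo_u0 hi_u0].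
have width : j.+1%:R * mesh n = j%:R * mesh n + mesh n.
  by rewrite -addn1 natrD mulrDl mul1r.
by rewrite ler_distl; rewrite width in hi_u hi_u0; apply/andP; split; lra.
Qed.

Lemma cubes_volume n m : L + L <= n.+1%:R ->
  \sum_(0 <= j < m) vol2 (fun k => tnth (center n j).1 k - radius n j)
                         (fun k => tnth (center n j).1 k + radius n j)
                         (fun k => tnth (center n j).2 k - radius n j)
                         (fun k => tnth (center n j).2 k + radius n j)
  <= (L + L) ^+ 2 / n.+1%:R.
Proof.
move=> n_large; have r0 := ltW (mesh_gt0 n).
have diam1 : mesh n + mesh n <= 1.
  by rewrite -mulrDl ler_pdivrMr ?ltr0n // mul1r.
apply: (@le_trans _ _ (\sum_(0 <= j < m) if (j < n.+1)%N then (mesh n + mesh n) ^+ 2 else 0)).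
  apply: ler_sum => j _; rewrite vol2_cube /radius; case: ifP => _.
    by apply: ler_wiXn2l; [rewrite addr_ge0 | | exact: leq_add d_gt0 d_gt0].
  by rewrite addr0 expr0n addn_eq0 andbb (gtn_eqF d_gt0).
apply: le_trans (sum_nat_if_lt _ _ (sqr_ge0 _)) _.
suff -> : n.+1%:R * (mesh n + mesh n) ^+ 2 = (L + L) ^+ 2 / n.+1%:R by [].
by rewrite /mesh; field; rewrite addrC natr1 pnatr_eq0.
Qed.

Lemma controlled_curve_null_image :
  exists A : set (pt R d), [/\ measurable A, lebesgue_null2 A &
    forall u, 0 <= u <= 1 -> A (c u)].
Proof.
exists (\bigcap_n \bigcup_j cube (center n j) (radius n j)); split.
- apply: bigcapT_measurable => n; apply: bigcupT_measurable => j.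
  exact: measurable_box2.
- move=> eps eps0.
  have /andP [F1 _] : 0 <= F 1 <= F 1 by apply: controlled_range; rewrite ler01 lexx.
  pose n := Num.truncn ((L + L) ^+ 2 / eps + (L + L)).
  have n_large := truncnS_gt ((L + L) ^+ 2 / eps + (L + L)); rewrite -/n in n_large.
  have N0 : 0 < n.+1%:R :> R by rewrite ltr0n.
  exists (fun j k => tnth (center n j).1 k - radius n j),
         (fun j k => tnth (center n j).1 k + radius n j),
         (fun j k => tnth (center n j).2 k - radius n j),
         (fun j k => tnth (center n j).2 k + radius n j); split.
  + move=> j k; have : 0 <= radius n j.
      by rewrite /radius; case: ifP => // _; exact: ltW (mesh_gt0 n).
    by split; lra.
  + by move=> s /(_ n I).
  + move=> m; apply: le_trans (cubes_volume _ _) _.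
      by apply: ltW; apply: le_lt_trans n_large; rewrite lerDr divr_ge0 ?sqr_ge0 ?ltW.
    rewrite ler_pdivrMr //; apply: ltW; rewrite -ltr_pdivrMl //.
    by apply: le_lt_trans n_large; rewrite mulrC lerDl /L; lra.
- by move=> u u01 n _; have [j ?] := cubes_cover n u01; exists j.
Qed.
End NullImage.

Section Pushforward.
Variables (R : realType) (d : nat) (rho : {measure set (pt R d) -> \bar R}) (Lambda : R).
Variable phi : R -> pt R d.
Hypothesis Lambda_gt0 : 0 < Lambda.
Hypothesis mphi : measurable_fun `[(0:R), 1]%classic phi.
Hypothesis phi_law : forall A : set (pt R d), measurable A ->
  (rho A * (Lambda^-1)%:E)%E = lebesgue_measure (`[(0:R), 1]%classic `&` phi @^-1` A).

Lemma pushforward_not_negligible (proj : pt R d -> d.-tuple R) c :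
  (forall k, measurable_fun setT (fun s => tnth (proj s) k)) ->
  (forall V, proper_linear_subspace V -> rho [set s | ~ V (proj s)] <> 0%E) ->
  c <> [tuple 0 | _ < d] ->
  ~ (@lebesgue_measure R).-negligible
      (`[(0:R), 1]%classic `&` [set u | dotp (proj (phi u)) c <> 0]).
Proof.
move=> mproj proj_full c0 [N [mN N0 subN]].
apply: (proj_full _ (orthogonal_proper_linear_subspace c0)).
set A := [set s | ~ _].
have mA : measurable A.
  have mdot : measurable_fun setT (fun s => dotp (proj s) c).
    by apply: measurable_sum => k; apply: measurable_realfun.measurable_funM.
  rewrite (_ : A = (fun s => dotp (proj s) c) @^-1` (~` [set 0])) //.
  rewrite -[X in measurable X]setTI.
  exact: mdot measurableT _ (measurableC (measurable_set1 _)).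
have mpre : measurable (`[(0:R), 1]%classic `&` phi @^-1` A).
  by apply: mphi => //; exact: measurable_itv.
have : lebesgue_measure (`[(0:R), 1]%classic `&` phi @^-1` A) = 0%E.
  by apply/eqP; rewrite -measure_le0 -N0 le_measure ?inE.
rewrite -phi_law // => /eqP; rewrite mule_eq0 eqe invr_eq0 (gt_eqF Lambda_gt0) orbF.
by move/eqP.
Qed.
End Pushforward.

Lemma spanning_image_ae (R : realType) d (f : R -> d.-tuple R) (P : R -> Prop) :
  (forall c, c <> [tuple 0 | _ < d] -> ~ (@lebesgue_measure R).-negligible
      (`[(0:R), 1]%classic `&` [set u | dotp (f u) c <> 0])) ->
  {ae (@lebesgue_measure R), forall v, P v} ->
  spanning [set f v | v in [set v | 0 <= v <= 1 /\ P v]].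
Proof.
move=> f_full P_ae c c_orth; apply: contrapT => c0; apply: (f_full c c0).
apply: negligibleS P_ae => v [v01 fvc] Pv; apply/fvc/c_orth.
by exists v => //; split; rewrite /= in_itv /= in v01.
Qed.

Lemma bounded_variation_curve_null_image (R : realType) d (c : R -> pt R d) :
  (0 < d)%N -> (forall i, bounded_variation 0 1 (fun u => coord (c u) i)) ->
  exists A : set (pt R d), [/\ measurable A, lebesgue_null2 A &
    forall u, 0 <= u <= 1 -> A (c u)].
Proof.
move=> d_gt0 BVc.
apply: (controlled_curve_null_image d_gt0 (F := tv_sum 0 (fun i u => coord (c u) i))).
  by rewrite /tv_sum big1 // => i _; rewrite total_variationxx.
by move=> x y x0 xy y1; apply: (tv_sum_control (b := 1)).
Qed.

Theorem mainTheorem7 (R : realType) (d : nat) (hd : (1 <= d)%N)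
  (rho : {measure set (pt R d) -> \bar R}) (Lambda : R)
  (hLpos : 0 < Lambda)
  (hrhoOmega : rho (@Omega R d) = Lambda%:E)
  (hrhoOut : rho (~` @Omega R d) = 0%E)
  (hac : abs_cont_lebesgue2 (fun A => (rho A * (Lambda^-1)%:E)%E))
  (hgreen : forall V : set (d.-tuple R), proper_linear_subspace V ->
     rho [set s | ~ V s.1] <> 0%E)
  (hred : forall V : set (d.-tuple R), proper_linear_subspace V ->
     rho [set s | ~ V s.2] <> 0%E) :
  forall phi : R -> pt R d,
    measurable_fun `[(0:R), 1]%classic phi ->
    (forall u, `[(0:R), 1]%classic u -> @Omega R d (phi u)) ->
    (forall A : set (pt R d), measurable A ->
       (rho A * (Lambda^-1)%:E)%E = lebesgue_measure (`[(0:R), 1]%classic `&` phi @^-1` A)) ->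
    ~ sectionally_BV (fun u v => K (phi u) (phi v)).
Proof.
move=> phi mphi _ phi_law [BV_v BV_u].
have mfst k : measurable_fun setT (fun s : pt R d => tnth s.1 k).
  exact: measurableT_comp (measurable_tnth k) measurable_fst.
have msnd k : measurable_fun setT (fun s : pt R d => tnth s.2 k).
  exact: measurableT_comp (measurable_tnth k) measurable_snd.
have BVg k : bounded_variation 0 1 (fun u => tnth (phi u).1 k).
  apply: (bounded_variation_coord ltr01 (spanning_image_ae _ BV_v)) => [c c0|x].
    exact: (pushforward_not_negligible (proj := snd) hLpos mphi phi_law msnd hred c0).
  by move=> [v [v01 BVv] <-]; exact: BVv.
have BVr k : bounded_variation 0 1 (fun v => tnth (phi v).2 k).
  apply: (bounded_variation_coord ltr01 (spanning_image_ae _ BV_u)) => [c c0|x].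
    exact: (pushforward_not_negligible (proj := fst) hLpos mphi phi_law mfst hgreen c0).
  move=> [u [u01 BVu] <-]; under [fun v => _]funext => v do rewrite dotpC.
  exact: BVu.
have BVcoord i : bounded_variation 0 1 (fun u => coord (phi u) i) by case: i.
have [A [mA nullA phiA]] := bounded_variation_curve_null_image hd BVcoord.
have := hac A mA nullA; rewrite phi_law //.
rewrite (setIidl (B := phi @^-1` A)) => [|u]; last by rewrite /= in_itv; exact: phiA.
by rewrite lebesgue_measure_itv /= lte_fin ltr01 oppr0 adde0 => /eqP; rewrite eqe oner_eq0.
Qed.
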